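(* Let $\Gamma$ be a connected finite simple graph on $N\ge3$ vertices with minimum degree $d=2$ and $\varepsilon=\frac12$. If there are distinct vertices $u\sim v\sim w$ with $\deg u=\deg v=\deg w=2$, then $\Gamma$ is the cycle $C_3$ or the cycle $C_6$.
   Context: For a finite simple graph $\Gamma=(V,E)$ without isolated vertices, $\deg v$ is the number of neighbours of $v$ and $\mathcal N(v)=\{w\in V: w\sim v\}$. The normalized Laplacian acts on functions $f:V\to\mathbb R$ by $\Delta f(v)=f(v)-\frac{1}{\deg v}\sum_{w\sim v}f(w)$; its eigenvalues are $0=\lambda_1\le\lambda_2\le\dots\le\lambda_N$, and $\varepsilon:=\min_i|1-\lambda_i|$. $d$ denotes the minimum vertex degree. *)

From mathcomp Require Import all_boot all_order all_algebra fingraph.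
From mathcomp Require Import reals.
Set Implicit Arguments. Unset Strict Implicit. Unset Printing Implicit Defensive.
Import Order.TTheory GRing.Theory Num.Theory.
Local Open Scope ring_scope.

Definition simple_graph (T : finType) (adj : rel T) : Prop :=
  symmetric adj /\ irreflexive adj.

Definition deg (T : finType) (adj : rel T) (v : T) : nat := #|[set w | adj v w]|.

Definition connected_graph (T : finType) (adj : rel T) : Prop :=
  forall x y : T, connect adj x y.

Definition min_degree_is (T : finType) (adj : rel T) (d : nat) : Prop :=
  (forall v, (d <= deg adj v)%N) /\ exists v, deg adj v = d.

Definition nlap (R : realType) (T : finType) (adj : rel T) (f : T -> R) (v : T) : R :=
  f v - (deg adj v)%:R^-1 * \sum_(w | adj v w) f w.

Definition nlap_eigenvalue (R : realType) (T : finType) (adj : rel T) (l : R) : Prop :=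
  exists f : T -> R, (exists v, f v != 0) /\ forall v, nlap adj f v = l * f v.

Definition epsilon_is (R : realType) (T : finType) (adj : rel T) (e : R) : Prop :=
  (exists l, nlap_eigenvalue adj l /\ `|1 - l| = e) /\
  (forall l, nlap_eigenvalue adj l -> e <= `|1 - l|).

Definition cycle_adj (n : nat) : rel 'I_n :=
  fun i j => (j == (i.+1 %% n)%N :> nat) || (i == (j.+1 %% n)%N :> nat).

Definition iso_cycle (T : finType) (adj : rel T) (n : nat) : Prop :=
  exists f : T -> 'I_n, bijective f /\ forall x y, adj x y = cycle_adj (f x) (f y).

From mathcomp Require Import all_boot all_order all_algebra fingraph.
From mathcomp Require Import reals sesquilinear spectral complex.
From mathcomp Require Import ring lra.
Import Order.TTheory GRing.Theory Num.Theory.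
Local Open Scope ring_scope.
Set Implicit Arguments. Unset Strict Implicit. Unset Printing Implicit Defensive.

(* Epsilon = 1/2 means that every eigenvalue mu of the averaging operator
   A = I - Delta satisfies |mu| >= 1/2.  A is self-adjoint for the degree-weighted
   inner product (it is similar to the symmetric matrix D^-1/2 Adj D^-1/2), so the
   spectral theorem gives ||f||^2 <= 4 ||A f||^2 for every f.  Testing this with
   f = 1_x - 1_z, for two degree-2 vertices x, z with a common neighbour, shows
   that their other neighbours are distinct and again of degree 2.  Starting from
   the path u ~ v ~ w this propagates two steps in both directions, and what is
   left is C_3, C_6, a 5-cycle, or a path of seven distinct vertices; on the last
   two a signed sum of three indicator functions violates the inequality. *)

Section NormalSpectrum.
Local Open Scope sesquilinear_scope.
Variables (C : numClosedFieldType) (n : nat) (A : 'M[C]_n).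
Hypothesis normalA : A \is normalmx.
Local Notation U := (spectralmx A).
Local Notation d := (spectral_diag A).

Lemma spectral_row_eigen k : row k U *m A = d 0 k *: row k U.
Proof.
rewrite -row_mul [X in U *m X](orthomx_spectralP normalA) !mulmxA mulmxV ?spectral_unit //.
by rewrite mul1mx row_mul row_diag_mx -scalemxAl -rowE.
Qed.

Lemma spectral_row_neq0 k : row k U != 0.
Proof.
apply/eqP => Uk0; have := congr1 (row k) (unitarymxP (spectral_unitarymx A)).
rewrite row_mul Uk0 mul0mx => /rowP/(_ k); rewrite !mxE eqxx /=.
by move/eqP; rewrite eq_sym oner_eq0.
Qed.

Lemma normalmx_sqnorm_ge (c : C) : 0 <= c -> (forall k, c <= `|d 0 k|) ->
  forall h : 'rV_n, c ^+ 2 * (h *m h^t*) 0 0 <= (h *m A *m (h *m A)^t*) 0 0.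
Proof.
move=> c0 cd h.
have UtU : U^t* *m U = 1%:M.
  by rewrite -invmx_unitary ?spectral_unitarymx ?mulVmx ?spectral_unit.
have dotU (X Y : 'rV_n) : X *m U *m (Y *m U)^t* = X *m Y^t*.
  by rewrite trmx_mul map_mxM mulmxA mulmxtVK ?spectral_unitarymx.
set w := h *m U^t*.
have hw : h = w *m U by rewrite /w -mulmxA UtU mulmx1.
have hA : h *m A = w *m diag_mx d *m U.
  rewrite [X in h *m X](orthomx_spectralP normalA).
  by rewrite invmx_unitary ?spectral_unitarymx // !mulmxA.
clearbody w; rewrite hA dotU {1 2}hw dotU !mxE mulr_sumr; apply: ler_sum => j _.
rewrite mul_mx_diag !mxE rmorphM /= [X in _ <= X]mulrACA -normCK mulrC.
apply: ler_wpM2l; first exact: exprn_ge0.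
by rewrite -normCK lerXn2r ?nnegrE ?(le_trans c0).
Qed.

End NormalSpectrum.

Section RealSymmetric.
Local Open Scope sesquilinear_scope.
Variable R : rcfType.
Local Notation toC := (real_complex R).
Local Notation ReM := (map_mx (@complex.Re R)).

Lemma Re_mul_real (z : R[i]) (r : R) : complex.Re (toC r * z) = r * complex.Re z.
Proof. by case: z => a b; simpc. Qed.

Lemma map_Re_mul_real m n (u : 'rV[R[i]]_m) (S : 'M[R]_(m, n)) :
  ReM (u *m map_mx toC S) = ReM u *m S.
Proof.
apply/rowP => j; rewrite !mxE (raddf_sum (@complex.Re R : Rcomplex R -> R)).
by apply: eq_bigr => i _; rewrite !mxE; case: (u 0 i) => a b; simpc.
Qed.

Lemma Re_eigenvector n (S : 'M[R]_n) (u : 'rV[R[i]]_n) x :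
  u *m map_mx toC S = toC x *: u ->
  ReM u *m S = x *: ReM u.
Proof.
move=> eu; rewrite -map_Re_mul_real eu.
by apply/rowP => j; rewrite !mxE Re_mul_real.
Qed.

Lemma real_eigenvector n (S : 'M[R]_n) (u : 'rV[R[i]]_n) x :
  u != 0 -> u *m map_mx toC S = toC x *: u ->
  exists2 v : 'rV[R]_n, v != 0 & v *m S = x *: v.
Proof.
move=> u0 eu.
(* Re ('i * z) = - Im z, so Re u and Re ('i u) cannot both vanish. *)
have eiu : ('i%C *: u) *m map_mx toC S = toC x *: ('i%C *: u).
  by rewrite -scalemxAl eu !scalerA mulrC.
have [Re0|] := eqVneq (ReM u) 0.
  have [Rei0|] := eqVneq (ReM ('i%C *: u)) 0.
    case/eqP: u0; apply/rowP => j.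
    move/rowP/(_ j): Re0; move/rowP/(_ j): Rei0; rewrite !mxE.
    by case: (u 0 j) => a b /=; simpc => /eqP; rewrite oppr_eq0 => /eqP -> ->.
  by exists (ReM ('i%C *: u)) => //; exact: Re_eigenvector.
by exists (ReM u) => //; exact: Re_eigenvector.
Qed.

Lemma symmetric_sqnorm_ge n (S : 'M[R]_n) (c : R) : S^T = S -> 0 <= c ->
  (forall x (v : 'rV_n), v != 0 -> v *m S = x *: v -> c <= `|x|) ->
  forall g : 'rV_n, c ^+ 2 * (g *m g^T) 0 0 <= (g *m S *m (g *m S)^T) 0 0.
Proof.
move=> Ssym c0 c_eig g; set Sc := map_mx toC S.
have Sc_herm : Sc \is hermsymmx.
  apply: realsym_hermsym; last by apply/mxOverP => i j; rewrite mxE complex_real.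
  by apply/is_hermitianmxP; rewrite expr0 scale1r map_mx_id // /Sc map_trmx Ssym.
have Sc_normal := hermitian_normalmx Sc_herm.
have c_diag k : toC c <= `|spectral_diag Sc 0 k|.
  have /complex_realP [x dx] : spectral_diag Sc 0 k \is Num.real.
    by move/mxOverP: (hermitian_spectral_diag_real Sc_herm); apply.
  have ek := spectral_row_eigen Sc_normal k; rewrite dx in ek.
  have [v v0 ev] := real_eigenvector (spectral_row_neq0 Sc k) ek.
  rewrite dx (le_trans _ (normc_ge_Re _)) // lecR.
  exact: c_eig ev.
have toC_dot (X Y : 'rV[R]_n) :
    toC ((X *m Y^T) 0 0) = (map_mx toC X *m (map_mx toC Y)^t*) 0 0.
  have -> : (map_mx toC Y)^t* = map_mx toC Y^T.
    by apply/matrixP => i j; rewrite !mxE; exact: conjc_real.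
  by rewrite -map_mxM [RHS]mxE.
rewrite -lecR rmorphM rmorphXn /= !toC_dot map_mxM.
by apply: (normalmx_sqnorm_ge Sc_normal) => //; rewrite ler0c.
Qed.

End RealSymmetric.

Section NormalizedAdjacency.
Variables (R : realType) (T : finType) (adj : rel T).
Hypothesis adj_sym : symmetric adj.
Hypothesis deg_gt0 : forall x, (0 < deg adj x)%N.

Definition avg (f : T -> R) x : R := (deg adj x)%:R^-1 * \sum_(y | adj x y) f y.

Local Notation sqdeg x := (Num.sqrt (deg adj x)%:R : R).

Lemma sqdeg_neq0 x : sqdeg x != 0.
Proof. by rewrite gt_eqF // sqrtr_gt0 ltr0n. Qed.

Lemma sqr_sqdeg x : sqdeg x ^+ 2 = (deg adj x)%:R.
Proof. by rewrite sqr_sqrtr // ler0n. Qed.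

Definition normalized_adjmx : 'M[R]_#|T| := \matrix_(i, j)
  (if adj (enum_val i) (enum_val j) then (sqdeg (enum_val i) * sqdeg (enum_val j))^-1 else 0).

Lemma normalized_adjmx_sym : normalized_adjmx^T = normalized_adjmx.
Proof. by apply/matrixP => i j; rewrite !mxE adj_sym mulrC. Qed.

Lemma mul_normalized_adjmx (v : 'rV[R]_#|T|) j :
  (v *m normalized_adjmx) 0 j =
  (sqdeg (enum_val j))^-1 * \sum_(y | adj (enum_val j) y) v 0 (enum_rank y) / sqdeg y.
Proof.
rewrite mxE mulr_sumr [RHS]big_mkcond [RHS]big_enum_val; apply: eq_bigr => i _.
rewrite mxE enum_valK adj_sym; case: ifP => _; last by rewrite mulr0.
by rewrite invfM; ring.
Qed.

Lemma nlap_eigenvalue_normalized_adjmx x (v : 'rV[R]_#|T|) :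
  v != 0 -> v *m normalized_adjmx = x *: v -> nlap_eigenvalue adj (1 - x).
Proof.
move=> v0 ev; pose f y := v 0 (enum_rank y) / sqdeg y.
exists f; split.
  have /existsP [j vj] : [exists j, v 0 j != 0].
    apply: contraNT v0 => /existsPn v0; apply/eqP/rowP => j.
    by rewrite mxE; apply/eqP; rewrite -[_ == _]negbK v0.
  by exists (enum_val j); rewrite /f enum_valK mulf_neq0 // invr_eq0 sqdeg_neq0.
move=> y; rewrite /nlap; move/rowP: ev => /(_ (enum_rank y)).
rewrite mul_normalized_adjmx enum_rankK mxE => ev.
have -> : \sum_(w | adj y w) f w = sqdeg y * (x * v 0 (enum_rank y)).
  by rewrite -ev mulrA mulfV ?sqdeg_neq0 ?mul1r.
rewrite /f; have := sqr_sqdeg y; have := sqdeg_neq0 y; move: (sqdeg y) => s s0 <-.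
by field.
Qed.

Lemma avg_sqnorm_ge (c : R) : 0 <= c ->
  (forall l, nlap_eigenvalue adj l -> c <= `|1 - l|) ->
  forall f : T -> R, c ^+ 2 * \sum_x (deg adj x)%:R * f x ^+ 2 <=
                     \sum_x (deg adj x)%:R * avg f x ^+ 2.
Proof.
move=> c0 c_eig f; pose g : 'rV_#|T| := \row_i (sqdeg (enum_val i) * f (enum_val i)).
have := symmetric_sqnorm_ge normalized_adjmx_sym c0 _ g.
have -> : (g *m g^T) 0 0 = \sum_x (deg adj x)%:R * f x ^+ 2.
  rewrite mxE [RHS]big_enum_val; apply: eq_bigr => i _; rewrite !mxE.
  by have := sqr_sqdeg (enum_val i); move: (sqdeg _) => s <-; ring.
have -> : (g *m normalized_adjmx *m (g *m normalized_adjmx)^T) 0 0 =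
          \sum_x (deg adj x)%:R * avg f x ^+ 2.
  rewrite mxE [RHS]big_enum_val; apply: eq_bigr => i _; rewrite [(_^T) _ _]mxE.
  rewrite mul_normalized_adjmx /avg.
  under eq_bigr => y _ do rewrite mxE enum_rankK mulrAC divff ?sqdeg_neq0 // mul1r.
  have := sqr_sqdeg (enum_val i); have := sqdeg_neq0 (enum_val i).
  move: (sqdeg _) => s s0 <-.
  by field.
apply=> x v v0 /(nlap_eigenvalue_normalized_adjmx v0) /c_eig.
by rewrite opprB addrC subrK.
Qed.

End NormalizedAdjacency.

Ltac rewrite_neqs :=
  repeat match goal with
  | H : is_true (?a != ?b) |- context [?a == ?b] => rewrite (negbTE H)
  | H : is_true (?a != ?b) |- context [?b == ?a] => rewrite (eq_sym b a) (negbTE H)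
  | |- context [?a == ?a] => rewrite eqxx
  end.

Section Neighbours.
Variables (T : finType) (adj : rel T).
Hypothesis adj_sym : symmetric adj.

Definition neighbours (x a b : T) : Prop := forall t, adj x t = (t == a) || (t == b).

Lemma neighboursC x a b : neighbours x a b -> neighbours x b a.
Proof. by move=> nx t; rewrite nx orbC. Qed.

Lemma deg_neighbours x a b : a != b -> neighbours x a b -> deg adj x = 2%N.
Proof.
move=> ab nx; rewrite /deg; have -> : [set t | adj x t] = [set a; b].
  by apply/setP => t; rewrite !inE nx.
by rewrite cards2 ab.
Qed.

Lemma deg2_neighbours x a b : deg adj x = 2%N -> adj x a -> adj x b -> a != b ->
  neighbours x a b.
Proof.
move=> dx xa xb ab.
have E : [set t | adj x t] = [set a; b].
  apply/esym/eqP; rewrite eqEcard cards2 ab -/(deg adj x) dx andbT.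
  by apply/subsetP => t; rewrite !inE => /orP [] /eqP ->.
by move=> t; move/setP: E => /(_ t); rewrite !inE.
Qed.

Lemma deg2_other_neighbour x a : deg adj x = 2%N -> adj x a ->
  exists2 b, a != b & neighbours x a b.
Proof.
move=> dx xa.
have : #|[set t | adj x t] :\ a| == 1%N.
  have := cardsD1 a [set t | adj x t]; rewrite inE xa -/(deg adj x) dx => /eqP.
  by rewrite add1n eqSS eq_sym.
move/cards1P => [b /setP Eb]; have := Eb b; rewrite !inE eqxx => /andP [ba xb].
have ab : a != b by rewrite eq_sym.
by exists b => //; apply: deg2_neighbours.
Qed.

Hypothesis adj_conn : connected_graph adj.

Lemma connected_closed_seq (s : seq T) u : u \in s ->
  (forall x y, x \in s -> adj x y -> y \in s) -> forall t, t \in s.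
Proof.
move=> us cl t.
have cl' : closed adj (mem s).
  move=> x y xy; apply/idP/idP => [xs|ys]; first exact: cl xy.
  by apply: cl ys _; rewrite adj_sym.
by rewrite -(closed_connect cl' (adj_conn u t)).
Qed.

Lemma iso_cycle_of_seq m (s : seq T) x0 : size s = m.+1 -> uniq s -> (forall t, t \in s) ->
  (forall i j : 'I_m.+1, adj (nth x0 s i) (nth x0 s j) = cycle_adj i j) ->
  iso_cycle adj m.+1.
Proof.
move=> ss us alls adj_nth.
pose phi t : 'I_m.+1 := inord (index t s).
pose psi (i : 'I_m.+1) := nth x0 s i.
have phiK : cancel phi psi by move=> t; rewrite /phi /psi inordK ?nth_index // -ss index_mem.
have psiK : cancel psi phi by move=> i; rewrite /phi /psi index_uniq ?ss // inord_val.
exists phi; split; first by exists psi.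
by move=> x y; rewrite -adj_nth; congr adj; symmetry; apply: phiK.
Qed.

Lemma neighbours_adj_neq x a b y z : neighbours x a b -> y != a -> y != b ->
  adj y z -> z != x.
Proof. by move=> nx ya yb; apply: contraTneq => ->; rewrite adj_sym nx; rewrite_neqs. Qed.

Lemma triangle_iso_C3 u v w : uniq [:: u; v; w] ->
  neighbours u v w -> neighbours v u w -> neighbours w u v -> iso_cycle adj 3.
Proof.
rewrite /= !inE !negb_or => /and3P [/andP [uv uw] vw _] nu nv nw.
apply: (@iso_cycle_of_seq _ [:: u; v; w] u) => //=.
- by rewrite !inE; rewrite_neqs.
- apply: (connected_closed_seq (mem_head u _)) => x y.
  rewrite !inE => /or3P [] /eqP -> /[!(nu, nv, nw)] /orP [] /eqP ->;
    by rewrite eqxx ?orbT.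
- by case=> [[|[|[|i]]] Hi] //; case=> [[|[|[|j]]] Hj] //=;
    rewrite ?(nu, nv, nw); rewrite_neqs.
Qed.

Lemma hexagon_iso_C6 u v w b c a : uniq [:: u; v; w; b; c; a] ->
  neighbours u v a -> neighbours v u w -> neighbours w v b ->
  neighbours b w c -> neighbours c a b -> neighbours a u c -> iso_cycle adj 6.
Proof.
move=> us nu nv nw nb nc na; move: (us); rewrite /= !inE !negb_or.
case/and5P => /and5P [uv uw ub uc ua] /and4P [vw vb vc va] /and3P [wb wc wa].
move=> /andP [bc ba] /andP [ca _].
apply: (@iso_cycle_of_seq _ [:: u; v; w; b; c; a] u) => //.
- apply: (connected_closed_seq (mem_head u _)) => x y.
  rewrite !inE => /or3P [/eqP -> | /eqP -> | /or4P [] /eqP ->];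
    rewrite ?(nu, nv, nw, nb, nc, na) => /orP [] /eqP ->; by rewrite eqxx ?orbT.
- case=> [[|[|[|[|[|[|i]]]]]] Hi] //; case=> [[|[|[|[|[|[|j]]]]]] Hj] //=;
    by rewrite ?(nu, nv, nw, nb, nc, na); rewrite_neqs.
Qed.

End Neighbours.

Lemma ler_natV (R : realFieldType) (p q : nat) : (q <= p)%N -> (0 < q)%N ->
  p%:R^-1 <= q%:R^-1 :> R.
Proof. by move=> qp q0; rewrite lef_pV2 ?ler_nat // posrE ltr0n // (leq_trans q0). Qed.

Lemma inv_add_ge1 (R : realFieldType) (m k : nat) : (2 <= m)%N -> (2 <= k)%N ->
  1 <= m%:R^-1 + k%:R^-1 :> R -> m = 2%N /\ k = 2%N.
Proof.
move=> m2 k2 H; have [im ik] := (ler_natV R m2 isT, ler_natV R k2 isT).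
case: (leqP 3%N m) => [m3 | m3]; first by exfalso; have := ler_natV R m3 isT; lra.
case: (leqP 3%N k) => [k3 | k3]; first by exfalso; have := ler_natV R k3 isT; lra.
by split; apply/eqP; rewrite eqn_leq -ltnS ?m3 ?k3.
Qed.

Lemma sum_supported (V : nmodType) (T : finType) (s : seq T) (G : T -> V) :
  uniq s -> (forall t, t \notin s -> G t = 0) -> \sum_t G t = \sum_(t <- s) G t.
Proof. by move=> us G0; rewrite (bigID (mem s)) /= [X in _ + X]big1 ?addr0 ?big_uniq. Qed.

Section TestFunctions.
Variables (R : realType) (T : finType) (adj : rel T).
Hypotheses (adj_sym : symmetric adj) (adj_irr : irreflexive adj).
Hypothesis deg_ge2 : forall x, (2 <= deg adj x)%N.
Hypothesis avg_sqnorm : forall f : T -> R,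
  \sum_x (deg adj x)%:R * f x ^+ 2 <= 4 * \sum_x (deg adj x)%:R * avg adj f x ^+ 2.

Lemma sum_adj_indicator t a : \sum_(w | adj t w) (w == a)%:R = (adj t a)%:R :> R.
Proof.
rewrite big_mkcond (bigD1 a) //= eqxx big1 ?addr0; first by case: (adj t a).
by move=> w /negbTE ->; case: (adj t w).
Qed.

Lemma avg_sqnorm_local (f : T -> R) (s s' : seq T) : uniq s -> uniq s' ->
  (forall t, t \notin s -> f t = 0) ->
  (forall t, t \notin s' -> \sum_(w | adj t w) f w = 0) ->
  \sum_(t <- s) (deg adj t)%:R * f t ^+ 2 <=
  4 * \sum_(t <- s') (\sum_(w | adj t w) f w) ^+ 2 / (deg adj t)%:R.
Proof.
move=> us us' f0 af0; have := avg_sqnorm f.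
have deg_neq0 t : (deg adj t)%:R != 0 :> R by rewrite pnatr_eq0 -lt0n (leq_trans _ (deg_ge2 t)).
have avgE t : (deg adj t)%:R * avg adj f t ^+ 2 = (\sum_(w | adj t w) f w) ^+ 2 / (deg adj t)%:R.
  by rewrite /avg; move: (deg_neq0 t); move: (deg adj t)%:R => d d0; field.
under [X in _ <= 4 * X]eq_bigr => t _ do rewrite avgE.
rewrite (sum_supported us) => [|t /f0 ->]; last by rewrite expr0n mulr0.
by rewrite (sum_supported us') => // t /af0 ->; rewrite expr0n mul0r.
Qed.

Lemma common_neighbour_deg2 x y z p q : x != z -> p != z -> y != p -> y != q ->
  neighbours adj x y p -> neighbours adj z y q ->
  [/\ p != q, deg adj p = 2%N & deg adj q = 2%N].
Proof.
move=> xz pz yp yq nx nz; pose f t : R := (t == x)%:R - (t == z)%:R.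
have fE t : \sum_(w | adj t w) f w = (adj x t)%:R - (adj z t)%:R.
  by rewrite sumrB !sum_adj_indicator !(adj_sym t).
have uxz : uniq [:: x; z] by rewrite /= inE xz.
have f0 t : t \notin [:: x; z] -> f t = 0.
  by rewrite !inE negb_or => /andP [tx tz]; rewrite /f; rewrite_neqs; rewrite subrr.
have sqnorm : \sum_(t <- [:: x; z]) (deg adj t)%:R * f t ^+ 2 = 4.
  rewrite !big_cons big_nil /f; rewrite_neqs.
  by rewrite (deg_neighbours yp nx) (deg_neighbours yq nz) /=; ring.
have [pq|pq] := eqVneq p q.
  have := avg_sqnorm_local uxz (isT : uniq [::]) f0.
  rewrite sqnorm big_nil mulr0 => H; exfalso.
  suff : (4 : R) <= 0 by lra.
  by apply: H => t _; rewrite fE nx nz pq subrr.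
have upq : uniq [:: p; q] by rewrite /= inE pq.
have := avg_sqnorm_local uxz upq f0.
rewrite sqnorm !big_cons big_nil !fE !nx !nz; rewrite_neqs.
rewrite /= subr0 sub0r sqrrN expr1n !div1r addr0 => H.
have [|dp dq] := inv_add_ge1 (R := R) (deg_ge2 p) (deg_ge2 q); last by [].
suff : (4 : R) <= 4 * ((deg adj p)%:R^-1 + (deg adj q)%:R^-1) by lra.
apply: H => t; rewrite !inE negb_or => /andP [tp tq].
by rewrite fE nx nz; rewrite_neqs; rewrite subrr.
Qed.

Lemma no_pentagon u v w b a : uniq [:: u; v; w; b; a] ->
  neighbours adj v u w -> neighbours adj w v b -> neighbours adj a u b -> False.
Proof.
rewrite /= !inE !negb_or.
case/and5P => /and4P [uv uw ub ua] /and3P [vw vb va] /andP [wb wa] ba _ nv nw na.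
pose f t : R := (t == a)%:R - (t == v)%:R - (t == w)%:R.
have fE t : \sum_(x | adj t x) f x = (adj a t)%:R - (adj v t)%:R - (adj w t)%:R.
  by rewrite !sumrB !sum_adj_indicator !(adj_sym t).
have us : uniq [:: a; v; w] by rewrite /= !inE; rewrite_neqs.
have us' : uniq [:: u; b; v; w] by rewrite /= !inE; rewrite_neqs.
have f0 t : t \notin [:: a; v; w] -> f t = 0.
  by rewrite !inE !negb_or => /and3P [ta tv tw]; rewrite /f; rewrite_neqs; rewrite !subr0.
have af0 t : t \notin [:: u; b; v; w] -> \sum_(x | adj t x) f x = 0.
  move=> /[!inE] /[!negb_or] /and4P [tu tb tv tw].
  by rewrite fE na nv nw; rewrite_neqs; rewrite !subr0.
have := avg_sqnorm_local us us' f0 af0.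
rewrite !big_cons !big_nil !fE !na !nv !nw /f; rewrite_neqs.
rewrite (deg_neighbours ub na) (deg_neighbours uw nv) (deg_neighbours vb nw) /=.
lra.
Qed.

Lemma no_long_path c a u v w b d : uniq [:: c; a; u; v; w; b; d] ->
  neighbours adj a u c -> neighbours adj v u w -> neighbours adj b w d -> False.
Proof.
rewrite /= !inE !negb_or.
case/and5P => /and5P [ca cu cv cw /andP [cb cd]] /and5P [au av aw ab ad].
move=> /and4P [uv uw ub ud] /and3P [vw vb vd] /and3P [/andP [wb wd] bd _].
move=> na nv nb; pose f t : R := (t == a)%:R - (t == v)%:R + (t == b)%:R.
have fE t : \sum_(x | adj t x) f x = (adj a t)%:R - (adj v t)%:R + (adj b t)%:R.
  by rewrite big_split sumrB /= !sum_adj_indicator !(adj_sym t).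
have us : uniq [:: a; v; b] by rewrite /= !inE; rewrite_neqs.
have us' : uniq [:: c; u; w; d] by rewrite /= !inE; rewrite_neqs.
have f0 t : t \notin [:: a; v; b] -> f t = 0.
  by rewrite !inE !negb_or => /and3P [ta tv tb]; rewrite /f; rewrite_neqs; rewrite subr0 addr0.
have af0 t : t \notin [:: c; u; w; d] -> \sum_(x | adj t x) f x = 0.
  move=> /[!inE] /[!negb_or] /and4P [tc tu tw td].
  by rewrite fE na nv nb; rewrite_neqs; rewrite subr0 addr0.
have := avg_sqnorm_local us us' f0 af0.
rewrite !big_cons !big_nil !fE !na !nv !nb /f; rewrite_neqs.
have uc : u != c by rewrite eq_sym.
rewrite (deg_neighbours uc na) (deg_neighbours uw nv) (deg_neighbours wd nb) /=.
by have := ler_natV R (deg_ge2 c) isT; have := ler_natV R (deg_ge2 d) isT; lra.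
Qed.

Hypothesis adj_conn : connected_graph adj.

Lemma adj_neq x y : adj x y -> x != y.
Proof. by apply: contraTneq => ->; rewrite adj_irr. Qed.

Lemma deg2_path5_iso_C6 a u v w b : uniq [:: a; u; v; w; b] ->
  neighbours adj u v a -> neighbours adj v u w -> neighbours adj w v b ->
  deg adj a = 2%N -> deg adj b = 2%N -> iso_cycle adj 6.
Proof.
rewrite /= !inE !negb_or.
case/and5P => /and4P [au av aw ab] /and3P [uv uw ub] /andP [vw vb] wb _ nu nv nw da db.
have [va wa wu] : [/\ v != a, w != a & w != u] by split; rewrite eq_sym.
have [c uc na] : exists2 c, u != c & neighbours adj a u c.
  by apply: deg2_other_neighbour; rewrite // adj_sym nu eqxx orbT.
have [d wd nb] : exists2 d, w != d & neighbours adj b w d.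
  by apply: deg2_other_neighbour; rewrite // adj_sym nw eqxx orbT.
have ac : adj a c by rewrite na eqxx orbT.
have bd : adj b d by rewrite nb eqxx orbT.
have [ac' bd'] := (adj_neq ac, adj_neq bd).
have [wc _ dc] := common_neighbour_deg2 va wa uw uc nv na.
have [ud _ dd] := common_neighbour_deg2 vb ub wu wd (neighboursC nv) nb.
have cv : c != v := neighbours_adj_neq adj_sym nv au aw ac.
have [cb|cb] := eqVneq c b.
  subst c; exfalso; apply: (no_pentagon _ nv nw na).
  by rewrite /= !inE; rewrite_neqs.
have [cd|cd] := eqVneq c d.
  subst d; apply: (hexagon_iso_C6 adj_sym adj_conn _ nu nv nw nb _ na).
    by rewrite /= !inE; rewrite_neqs.
  by apply: deg2_neighbours; rewrite // adj_sym ?na ?nb eqxx ?orbT.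
have [bu bc bw] : [/\ b != u, b != c & b != w] by split; rewrite eq_sym.
have da' : d != a := neighbours_adj_neq adj_sym na bu bc bd.
have dv : d != v := neighbours_adj_neq adj_sym nv bu bw bd.
exfalso; apply: (no_long_path _ na nv nb).
by rewrite /= !inE; rewrite_neqs.
Qed.

Lemma deg2_path_iso_cycle u v w : u != w -> adj u v -> adj v w ->
  deg adj u = 2%N -> deg adj v = 2%N -> deg adj w = 2%N ->
  iso_cycle adj 3 \/ iso_cycle adj 6.
Proof.
move=> uw uv vw du dv dw; have [uv' vw'] := (adj_neq uv, adj_neq vw).
have vu : adj v u by rewrite adj_sym.
have wv : adj w v by rewrite adj_sym.
have nv := deg2_neighbours dv vu vw uw.
have [a va nu] := deg2_other_neighbour du uv.
have [b vb nw] := deg2_other_neighbour dw wv.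
have [aw|aw] := eqVneq a w.
  subst a; left; apply: (triangle_iso_C3 adj_sym adj_conn _ nu nv).
    by rewrite /= !inE; rewrite_neqs.
  by apply: deg2_neighbours; rewrite // adj_sym nu eqxx orbT.
have [ab da db] := common_neighbour_deg2 uw aw va vb nu nw.
have ua : adj u a by rewrite nu eqxx orbT.
have wb : adj w b by rewrite nw eqxx orbT.
have [wv' wa] : w != v /\ w != a by split; rewrite eq_sym.
have bu : b != u := neighbours_adj_neq adj_sym nu wv' wa wb.
have [ua' wb'] := (adj_neq ua, adj_neq wb).
right; apply: (deg2_path5_iso_C6 _ nu nv nw da db).
by rewrite /= !inE; rewrite_neqs.
Qed.

End TestFunctions.

Unset Implicit Arguments.

Theorem mainTheorem8 (R : realType) (T : finType) (adj : rel T) :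
  simple_graph adj ->
  connected_graph adj ->
  (3 <= #|T|)%N ->
  min_degree_is adj 2 ->
  epsilon_is adj (1 / 2 : R) ->
  (exists u v w : T, [/\ u != v, v != w, u != w & adj u v /\ adj v w] /\
     [/\ deg adj u = 2%N, deg adj v = 2%N & deg adj w = 2%N]) ->
  iso_cycle adj 3 \/ iso_cycle adj 6.
Proof.
move=> [adj_sym adj_irr] adj_conn _ [deg_ge2 _] [_ eps_ge].
move=> [u [v [w [[_ _ uw [uv vw]] [du dv dw]]]]].
have deg_gt0 x : (0 < deg adj x)%N by apply: leq_trans (deg_ge2 x).
have avg_sqnorm (f : T -> R) : \sum_x (deg adj x)%:R * f x ^+ 2 <=
    4 * \sum_x (deg adj x)%:R * avg adj f x ^+ 2.
  have half_ge0 : 0 <= 1 / 2 :> R by lra.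
  by have := avg_sqnorm_ge adj_sym deg_gt0 half_ge0 eps_ge f; lra.
exact: (deg2_path_iso_cycle adj_sym adj_irr deg_ge2 avg_sqnorm adj_conn uw uv vw du dv dw).
Qed.
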